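(* Let $G$ be a td-group acting isometrically, properly, cocompactly and smoothly on a locally compact CAT(0)-space $X$. Let $\mathcal{A}$ be a collection of closed convex subspaces of $X$ such that: (a) for all $A,A'\in\mathcal{A}$ there is $g\in G$ with $g(A)=A'$ and $g|_{A\cap A'}=\mathrm{id}_{A\cap A'}$; (b) for every $A\in\mathcal{A}$ the quotient $\Gamma_A=\{g\in G\mid gA=A\}/\{g\in G\mid g|_A=\mathrm{id}_A\}$ is discrete; (c) for any $x,y\in X$ there is $A\in\mathcal{A}$ with $x,y\in A$. Then for every $A\in\mathcal{A}$ we have $G\cdot \mathrm{FS}(A)=\mathrm{FS}(X)$.
   Context: A td-group is a topological group in which the identity admits a countable neighborhood basis of compact open subgroups. An action is smooth if all isotropy groups are open. A generalized geodesic in $X$ is a continuous map $c\colon\mathbb{R}\to X$ for which there is an open interval $U\subseteq\mathbb{R}$ (possibly unbounded, possibly all of $\mathbb{R}$) such that $c|_U$ is an isometric embedding and $c|_{\mathbb{R}\setminus U}$ is locally constant. The flow space $\mathrm{FS}(X)$ is the space of all generalized geodesics with metric $d_{\mathrm{FS}}(c,c')=\int_{\mathbb{R}} d_X(c(t),c'(t))\,2e^{-|t|}\,dt$, and $G$ acts by $(gc)(t)=g(c(t))$. For $A\subseteq X$, $\mathrm{FS}(A)\subseteq\mathrm{FS}(X)$ is the subspace of generalized geodesics with image in $A$. $\Gamma_A$ carries the quotient topology. *)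

From HB Require Import structures.
From mathcomp Require Import all_boot all_order all_algebra.
From mathcomp Require Import all_classical all_reals all_analysis.
Set Implicit Arguments.
Unset Strict Implicit.
Unset Printing Implicit Defensive.
Import Order.TTheory GRing.Theory Num.Theory.
Local Open Scope classical_set_scope.
Local Open Scope ring_scope.

Section Metric.
Context {R : realType} {X : Type} (d : X -> X -> R).

Definition is_metric : Prop :=
  (forall x y, d x y = 0 <-> x = y) /\
  (forall x y, d x y = d y x) /\
  (forall x y z, d x z <= d x y + d y z).

Definition mball (x : X) (e : R) : set X := [set y | d x y < e].

Definition mopen (U : set X) : Prop :=
  forall x, U x -> exists2 e : R, 0 < e & mball x e `<=` U.

Definition mclosed (C : set X) : Prop := mopen (~` C).

Definition mcompact (K : set X) : Prop :=
  forall (I : Type) (U : I -> set X), (forall i, mopen (U i)) ->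
    K `<=` \bigcup_i U i ->
    exists F : set I, finite_set F /\ K `<=` \bigcup_(i in F) U i.

Definition mlocally_compact : Prop :=
  forall x, exists K, mcompact K /\ exists2 e : R, 0 < e & mball x e `<=` K.

Definition geod_seg (c : R -> X) (x y : X) : Prop :=
  c 0 = x /\ c (d x y) = y /\
  forall s t, 0 <= s <= d x y -> 0 <= t <= d x y -> d (c s) (c t) = `|s - t|.

Definition geodesic_space : Prop := forall x y, exists c, geod_seg c x y.

Definition eucl (P Q : R * R) : R :=
  Num.sqrt ((P.1 - Q.1) ^+ 2 + (P.2 - Q.2) ^+ 2).
Definition interp (P Q : R * R) (t : R) : R * R :=
  (P.1 + t * (Q.1 - P.1), P.2 + t * (Q.2 - P.2)).

(* z = c s is a point on the side [x,y] (given by c) and zb its comparison point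
   on the side [P,Q] of the comparison triangle *)
Definition on_side (c : R -> X) (x y : X) (P Q : R * R) (z : X) (zb : R * R) :=
  exists s, 0 <= s <= d x y /\ z = c s /\ zb = interp P Q (s / d x y).

Definition CAT0_ineq : Prop :=
  forall (p q r : X) (c1 c2 c3 : R -> X),
    geod_seg c1 p q -> geod_seg c2 q r -> geod_seg c3 r p ->
  forall P Q Rr : R * R,
    eucl P Q = d p q -> eucl Q Rr = d q r -> eucl Rr P = d r p ->
  let tri z zb := on_side c1 p q P Q z zb \/ on_side c2 q r Q Rr z zb \/
                  on_side c3 r p Rr P z zb in
  forall z zb w wb, tri z zb -> tri w wb -> d z w <= eucl zb wb.

Definition CAT0_space : Prop := is_metric /\ geodesic_space /\ CAT0_ineq.

Definition convex (A : set X) : Prop :=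
  forall x y c, A x -> A y -> geod_seg c x y ->
    forall s, 0 <= s <= d x y -> A (c s).

Definition mcontinuous (c : R -> X) : Prop :=
  forall t e, 0 < e -> exists2 del : R, 0 < del &
    forall s, `|s - t| < del -> d (c t) (c s) < e.

(* generalized geodesic: U = ]a,b[ open interval, a,b extended reals;
   a = b allowed (U empty: constant maps) *)
Definition gen_geod (c : R -> X) : Prop :=
  mcontinuous c /\
  exists a b : \bar R, (a <= b)%E /\
    let U := [set t : R | (a < t%:E)%E /\ (t%:E < b)%E] in
    (forall s t, U s -> U t -> d (c s) (c t) = `|s - t|) /\
    (forall t, ~ U t -> exists2 e : R, 0 < e &
        forall s, `|s - t| < e -> ~ U s -> c s = c t).

Definition FS (A : set X) : set (R -> X) :=
  [set c | gen_geod c /\ forall t, A (c t)].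

End Metric.

Record group_law {G : Type} (mul : G -> G -> G) (inv : G -> G) (one : G) : Prop :=
  { gmulA : forall a b c, mul a (mul b c) = mul (mul a b) c;
    gmul1 : forall a, mul one a = a;
    gmulV : forall a, mul (inv a) a = one }.

Section Groups.
Context {G : topologicalType} (mul : G -> G -> G) (inv : G -> G) (one : G).

Definition topological_group : Prop :=
  group_law mul inv one /\
  continuous (fun p : G * G => mul p.1 p.2) /\ continuous inv.

Definition is_subgroup (H : set G) : Prop :=
  H one /\ (forall g h, H g -> H h -> H (mul g h)) /\ (forall g, H g -> H (inv g)).

Definition td_group : Prop :=
  topological_group /\
  exists K : nat -> set G,
    (forall n, compact (K n) /\ open (K n) /\ is_subgroup (K n)) /\
    (forall U, nbhs one U -> exists n, K n `<=` U).
End Groups.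

Section Actions.
Context {R : realType} {G : topologicalType} (mul : G -> G -> G) (one : G)
  {X : Type} (d : X -> X -> R) (act : G -> X -> X).

Definition group_action : Prop :=
  (forall x, act one x = x) /\ (forall g h x, act (mul g h) x = act g (act h x)).

Definition isometric_action : Prop := forall g x y, d (act g x) (act g y) = d x y.

Definition proper_action : Prop :=
  forall K, mcompact d K -> compact [set g | exists2 k, K k & K (act g k)].

Definition cocompact_action : Prop :=
  exists K, mcompact d K /\ forall x, exists g k, K k /\ act g k = x.

Definition smooth_action : Prop := forall x, open [set g | act g x = x].

Definition Stab (A : set X) : set G := [set g | act g @` A = A].
Definition Fix (A : set X) : set G := [set g | forall x, A x -> act g x = x].

(* Gamma_A = Stab A / Fix A with the quotient topology (Stab A carrying the
   subspace topology) is discrete: every subset of Gamma_A is open, i.e. every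
   Fix A-saturated subset of Stab A is open in the subspace Stab A. *)
Definition Gamma_discrete (A : set X) : Prop :=
  forall S : set G, S `<=` Stab A ->
    (forall g h, S g -> Fix A h -> S (mul g h)) ->
    exists2 V : set G, open V & V `&` Stab A = S.

Definition G_FS (A : set X) : set (R -> X) :=
  [set c | exists g c', FS d A c' /\ c = (fun t => act g (c' t))].
End Actions.

From HB Require Import structures.
From mathcomp Require Import all_boot all_order all_algebra.
From mathcomp Require Import all_classical all_reals all_analysis.
From mathcomp Require Import ring lra.
Set Implicit Arguments.
Unset Strict Implicit.
Import Order.TTheory GRing.Theory Num.Theory.
Import numFieldNormedType.Exports.
Local Open Scope classical_set_scope.
Local Open Scope ring_scope.

(* Let c be a generalized geodesic and A0 in Acal contain c 0. For each n the
   piece c([-n, n]) lies on a geodesic segment, hence, by the covering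
   hypothesis and convexity, in some B in Acal; transitivity gives k_n mapping
   B onto A0 and fixing c 0. All k_n lie in the stabilizer of c 0, which is
   compact by properness, and by smoothness a cluster point k acts on each
   c t like infinitely many k_n, so k c lies in A0. An element mapping A onto
   A0 then moves k c into FS(A). Besides the metric axioms only properness,
   smoothness and continuity of the multiplication are needed. *)

Lemma locally_constant_eq (R : realType) (X : Type) (c : R -> X) (U : set R)
    (x y : R) :
  (forall t, ~ U t -> exists2 e : R, 0 < e &
     forall s, `|s - t| < e -> ~ U s -> c s = c t) ->
  x <= y -> (forall r, x <= r <= y -> ~ U r) -> c x = c y.
Proof.
move=> lc xy gap.
have lc_near r : ~ U r -> \forall s \near r, ~ U s -> c s = c r.
  move=> /lc[e e0 he]; apply/nbhs_ballP; exists e => // s.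
  by rewrite -ball_normE /= distrC; exact: he.
pose I := [set r : R | x <= r <= y].
have Ix : I x by rewrite /I /= lexx xy.
have connI : connected I.
  apply/connected_intervalP => u v /andP[xu _] /andP[_ vy] z /andP[uz zv].
  by rewrite /I /= (le_trans xu uz) (le_trans zv vy).
have Iy_eq : [set r | I r /\ c r = c x] = I.
  apply: connI; first by exists x.
  - exists ([set s | ~ U s -> c s = c x]°); first exact: open_interior.
    apply/seteqP; split => r /=.
      by move=> [Ir crx]; split => //; rewrite -crx; exact: lc_near (gap r Ir).
    by move=> [Ir /nbhs_singleton crx]; split => //; exact: crx (gap r Ir).
  - exists (~` [set s | ~ U s -> c s <> c x]°).
      exact/open_closedC/open_interior.
    apply/seteqP; split => r /=.
      by move=> [Ir crx]; split => // /nbhs_singleton/(_ (gap r Ir)).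
    move=> [Ir notin]; split => //; apply: contrapT => crx; apply: notin.
    by apply: filterS (lc_near r (gap r Ir)) => s h /h ->.
have : [set r | I r /\ c r = c x] y by rewrite Iy_eq /I /= xy lexx.
by move=> [_ ->].
Qed.

Lemma ereal_itv_oo_neq0 (R : realType) (a b : \bar R) :
  (a < b)%E -> exists m : R, (a < m%:E < b)%E.
Proof.
case: a => [a||]; case: b => [b||] //= ab.
- by exists ((a + b) / 2); rewrite lte_fin in ab; rewrite !lte_fin; lra.
- by exists (a + 1); rewrite lte_fin ltry andbT; lra.
- by exists (b - 1); rewrite lte_fin ltNyr /=; lra.
- by exists 0; rewrite ltNyr ltry.
Qed.

Lemma ereal_itv_oo_dense (R : realType) (a b : \bar R) (x e : R) :
  (a < b)%E -> (a <= x%:E <= b)%E -> 0 < e ->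
  exists u : R, (a < u%:E < b)%E /\ `|u - x| < e.
Proof.
move=> /ereal_itv_oo_neq0[m /andP[am mb]] /andP[ax xb] e0.
have [xm|mx|->]:= ltgtP x m; last by exists m; rewrite am mb subrr normr0.
- pose u := (x + Num.min m (x + e)) / 2.
  have [xu um] : x < u /\ u < Num.min m (x + e).
    by have [] := @midf_lt _ x (Num.min m (x + e)); rewrite ?lt_min ?xm ?ltrDl.
  move: um; rewrite lt_min => /andP[um uxe].
  exists u; rewrite (le_lt_trans ax) ?lte_fin // (lt_trans _ mb) ?lte_fin //.
  by rewrite ger0_norm ?subr_ge0 ?(ltW xu) // ltrBlDl.
- pose u := (Num.max m (x - e) + x) / 2.
  have [mu ux] : Num.max m (x - e) < u /\ u < x.
    by have [] := @midf_lt _ (Num.max m (x - e)) x; rewrite ?gt_max ?mx ?gtrBl.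
  move: mu; rewrite gt_max => /andP[mu xeu].
  exists u; rewrite (lt_le_trans _ xb) ?lte_fin // (lt_trans am) ?lte_fin //.
  by rewrite ler0_norm ?subr_le0 ?(ltW ux) // opprB ltrBlDl -ltrBlDr.
Qed.

(* The point of the closure of ]a, b[ nearest to t; [fine] is only applied to
   a finite endpoint when a < b. *)
Definition clamp {R : realType} (a b : \bar R) (t : R) : R :=
  if (t%:E < a)%E then fine a else if (b < t%:E)%E then fine b else t.

Section Clamp.
Variables (R : realType) (a b : \bar R).
Hypothesis ab : (a < b)%E.

Lemma clamp_id t : (a <= t%:E <= b)%E -> clamp a b t = t.
Proof. by move=> /andP[ha hb]; rewrite /clamp !ltNge ha hb. Qed.

Lemma fine_lbK {t : R} : (t%:E < a)%E -> (fine a)%:E = a.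
Proof.
move=> ta; rewrite fineK // fin_numElt (lt_trans (ltNyr t) ta).
exact: lt_le_trans ab (leey b).
Qed.

Lemma fine_ubK {t : R} : (b < t%:E)%E -> (fine b)%:E = b.
Proof.
move=> bt; rewrite fineK // fin_numElt (lt_trans bt (ltry t)) andbT.
exact: le_lt_trans (leNye a) ab.
Qed.

Lemma clamp_mem t : (a <= (clamp a b t)%:E <= b)%E.
Proof.
rewrite /clamp; case: ifPn => [ta|]; first by rewrite (fine_lbK ta) lexx ltW.
rewrite -leNgt => ha; case: ifPn => [bt|].
  by rewrite (fine_ubK bt) lexx ltW.
by rewrite -leNgt => hb; rewrite ha hb.
Qed.

Lemma clamp_nondecreasing : {homo clamp a b : s t / s <= t}.
Proof.
move=> s t st; have [sa|ha] := ltP s%:E a.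
  by rewrite {1}/clamp sa -lee_fin (fine_lbK sa); case/andP: (clamp_mem t).
have [bt|hb] := ltP b t%:E.
  have -> : clamp a b t = fine b.
    by rewrite /clamp ltNge (le_trans ha) ?lee_fin // bt.
  by rewrite -lee_fin (fine_ubK bt); case/andP: (clamp_mem s).
rewrite !clamp_id ?ha ?hb ?(le_trans _ hb) ?(le_trans ha) ?lee_fin //.
Qed.

End Clamp.

Lemma geod_seg_shift (R : realType) (X : Type) (d : X -> X -> R) (c : R -> X)
    (p q : R) :
  p <= q ->
  (forall s t, p <= s <= q -> p <= t <= q -> d (c s) (c t) = `|s - t|) ->
  geod_seg d (fun r => c (p + r)) (c p) (c q).
Proof.
move=> pq iso; have dpq : d (c p) (c q) = q - p.
  by rewrite iso ?lexx ?pq // distrC ger0_norm ?subr_ge0.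
rewrite /geod_seg dpq addr0 subrKC; split=> //; split=> // s t.
move=> /andP[s0 s1] /andP[t0 t1]; rewrite iso; first by congr `|_|; ring.
  by apply/andP; split; lra.
by apply/andP; split; lra.
Qed.

Section GeneralizedGeodesic.
Variables (R : realType) (X : Type) (d : X -> X -> R) (c : R -> X).
Variables (a b : \bar R).
Hypotheses (d_metric : is_metric d) (ab : (a < b)%E) (c_cont : mcontinuous d c).
Let U := [set t : R | (a < t%:E)%E /\ (t%:E < b)%E].
Hypothesis c_iso : forall s t, U s -> U t -> d (c s) (c t) = `|s - t|.
Hypothesis c_lc : forall t, ~ U t -> exists2 e : R, 0 < e &
  forall s, `|s - t| < e -> ~ U s -> c s = c t.

Lemma gen_geod_clamp t : c (clamp a b t) = c t.
Proof.
rewrite /clamp; case: ifPn => [ta|].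
  symmetry; apply: (locally_constant_eq c_lc).
    by rewrite -lee_fin (fine_lbK ab ta) ltW.
  by move=> r /andP[_ ra] [+ _]; rewrite -(fine_lbK ab ta) lte_fin; lra.
rewrite -leNgt => ha; case: ifPn => [bt|] //.
apply: (locally_constant_eq c_lc).
  by rewrite -lee_fin (fine_ubK ab bt) ltW.
by move=> r /andP[br _] [_]; rewrite -(fine_ubK ab bt) lte_fin; lra.
Qed.

Lemma gen_geod_iso_closure x y : (a <= x%:E <= b)%E -> (a <= y%:E <= b)%E ->
  d (c x) (c y) = `|x - y|.
Proof.
case: d_metric => _ [d_sym d_tri] hx hy.
suff approx e : 0 < e -> d (c x) (c y) <= `|x - y| + 4 * e /\
                         `|x - y| <= d (c x) (c y) + 4 * e.
  apply/eqP; rewrite eq_le; apply/andP; split; apply/ler_addgt0Pr => e e0;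
    have := approx (e / 4) (divr_gt0 e0 (ltr0Sn _ 3)); lra.
move=> e0; have [ex ex0 near_x] := c_cont x e0.
have [ey ey0 near_y] := c_cont y e0.
have ex_e : 0 < Num.min ex e by rewrite lt_min ex0 e0.
have ey_e : 0 < Num.min ey e by rewrite lt_min ey0 e0.
have [u [Uu]] := ereal_itv_oo_dense ab hx ex_e.
rewrite lt_min => /andP[/near_x cxu ux].
have [v [Uv]] := ereal_itv_oo_dense ab hy ey_e.
rewrite lt_min => /andP[/near_y cyv vy].
have cuv := c_iso (andP Uu) (andP Uv).
have := d_tri (c x) (c u) (c y); have := d_tri (c u) (c v) (c y).
have := d_tri (c u) (c x) (c v); have := d_tri (c x) (c y) (c v).
rewrite [d (c v) (c y)]d_sym [d (c u) (c x)]d_sym.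
have := ler_distD y x v; have := ler_distD x u v; have := ler_distD u x y.
have := ler_distD v u y.
have := distrC u v; have := distrC x y; have := distrC u x; have := distrC v y.
split; lra.
Qed.

Lemma gen_geod_segment_lt N : 0 <= N -> exists p q : R,
  geod_seg d (fun r => c (p + r)) (c p) (c q) /\
  forall t, `|t| <= N -> exists2 r, 0 <= r <= d (c p) (c q) & c t = c (p + r).
Proof.
move=> N0; pose p := clamp a b (- N); pose q := clamp a b N.
have mono := clamp_nondecreasing ab.
have pq : p <= q by apply: mono; lra.
have closure_pq s : p <= s <= q -> (a <= s%:E <= b)%E.
  move=> /andP[ps sq]; have /andP[ap _] := clamp_mem ab (- N).
  have /andP[_ qb] := clamp_mem ab N.
  by rewrite (le_trans ap) ?lee_fin // (le_trans _ qb) ?lee_fin.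
have iso_pq s t : p <= s <= q -> p <= t <= q -> d (c s) (c t) = `|s - t|.
  by move=> /closure_pq hs /closure_pq ht; exact: gen_geod_iso_closure.
have dpq : d (c p) (c q) = q - p.
  by rewrite iso_pq ?lexx ?pq // distrC ger0_norm ?subr_ge0.
exists p, q; split; first exact: geod_seg_shift.
move=> t; rewrite ler_norml => /andP[Nt tN].
exists (clamp a b t - p); last by rewrite subrKC gen_geod_clamp.
by rewrite dpq subr_ge0 lerB ?mono.
Qed.

End GeneralizedGeodesic.

Lemma gen_geod_segment (R : realType) (X : Type) (d : X -> X -> R) (c : R -> X)
    (N : R) :
  is_metric d -> gen_geod d c -> 0 <= N ->
  exists (x y : X) (s : R -> X), geod_seg d s x y /\
    forall t, `|t| <= N -> exists2 r, 0 <= r <= d x y & c t = s r.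
Proof.
move=> d_metric [c_cont [a [b [ab [c_iso c_lc]]]]] N0.
have [eq_ab|neq_ab] := eqVneq a b; last first.
  have lt_ab : (a < b)%E by rewrite lt_neqAle neq_ab ab.
  have [p [q [seg in_seg]]] :=
    gen_geod_segment_lt d_metric lt_ab c_cont c_iso c_lc N0.
  by exists (c p), (c q), (fun r => c (p + r)).
have c_cst t : c t = c 0.
  have gap r : ~ ((a < r%:E)%E /\ (r%:E < b)%E).
    by rewrite eq_ab => -[ar rb]; have := lt_trans ar rb; rewrite ltxx.
  have [t0|t0] := leP t 0.
    exact: locally_constant_eq c_lc t0 (fun r _ => gap r).
  by symmetry; apply: locally_constant_eq c_lc (ltW t0) (fun r _ => gap r).
have d00 : d (c 0) (c 0) = 0 by apply/(proj1 d_metric).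
exists (c 0), (c 0), (fun=> c 0); split; last by exists 0; rewrite ?d00 ?lexx.
rewrite /geod_seg d00; do 2!split=> //.
by move=> s t st ts; rewrite -(le_anti st) -(le_anti ts) subrr normr0.
Qed.

Lemma gen_geod_comp_isometry (R : realType) (X : Type) (d : X -> X -> R)
    (f : X -> X) (c : R -> X) :
  (forall x y, d (f x) (f y) = d x y) -> gen_geod d c ->
  gen_geod d (fun t => f (c t)).
Proof.
move=> f_iso [c_cont [a [b [ab /= [c_iso c_lc]]]]]; split.
  move=> t e /(c_cont t)[del del0 near_t].
  by exists del => // s /near_t; rewrite f_iso.
exists a, b; split=> //; split=> [s t Us Ut|t /c_lc[e e0 cst]].
  by rewrite f_iso c_iso.
by exists e => // s ts Us; rewrite cst.
Qed.

Lemma group_law_mulgV (T : Type) (mul : T -> T -> T) (inv : T -> T) (one : T) :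
  group_law mul inv one -> forall a, mul a (inv a) = one.
Proof.
case=> mulA mul1 mulV a.
rewrite -[mul a _]mul1 -(mulV (inv a)) -mulA.
by rewrite [mul (inv a) (mul a _)]mulA mulV mul1.
Qed.

Lemma continuous_mull (G : topologicalType) (mul : G -> G -> G) (a : G) :
  continuous (fun p : G * G => mul p.1 p.2) -> continuous (mul a).
Proof.
move=> mul_cont g.
apply: (continuous_comp (f := pair a) (g := fun p : G * G => mul p.1 p.2)).
  by apply: cvg_pair; [exact: cvg_cst | exact: cvg_id].
exact: mul_cont.
Qed.

Lemma mcompact_set1 (R : realType) (X : Type) (d : X -> X -> R) (x : X) :
  mcompact d [set x].
Proof.
move=> I U _ cover; have [i _ Uix] := cover x erefl.
by exists [set i]; split; [exact: finite_set1 | move=> _ ->; exists i].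
Qed.

Lemma proper_action_compact_stabilizer (R : realType) (G : topologicalType)
    (X : Type) (d : X -> X -> R) (act : G -> X -> X) (x : X) :
  proper_action d act -> compact [set g | act g x = x].
Proof.
move=> /(_ _ (@mcompact_set1 _ _ d x)); congr compact; apply/seteqP.
by split=> g /=; [move=> -[_ -> ->] | exists x].
Qed.

Lemma smooth_action_cluster (G : topologicalType) (mul : G -> G -> G)
    (inv : G -> G) (one : G) (X T : Type) (act : G -> X -> X) (S : set G)
    (k : nat -> G) (f : T -> X) (P : X -> Prop) :
  group_law mul inv one -> continuous (fun p : G * G => mul p.1 p.2) ->
  group_action mul one act -> smooth_action act ->
  compact S -> (forall n, S (k n)) ->
  (forall t, \forall n \near \oo, P (act (k n) (f t))) ->
  exists g, forall t, P (act g (f t)).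
Proof.
move=> gl mul_cont [act1 actM] smooth S_compact Sk eventually_P.
have [g [_ g_cluster]] : S `&` cluster (k @ \oo) !=set0.
  by apply: S_compact; exists 0%N => // n _; exact: Sk.
exists g => t.
pose O := [set h | act (mul (inv g) h) (f t) = f t].
have O_open : open O.
  apply: (open_comp (f := mul (inv g))) (smooth (f t)).
  by move=> h _; exact: continuous_mull.
have Og : O g by rewrite /O /= (gmulV gl) act1.
have [h [/= Ph Oh]] := g_cluster [set h | P (act h (f t))] O (eventually_P t)
  (open_nbhs_nbhs (conj O_open Og)).
by rewrite -Oh -actM (gmulA gl) (group_law_mulgV gl) (gmul1 gl).
Qed.

Theorem lemma2p3 (R : realType) (G : topologicalType)
    (mul : G -> G -> G) (inv : G -> G) (one : G)
    (X : Type) (d : X -> X -> R) (act : G -> X -> X) (Acal : set (set X)) :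
  td_group mul inv one ->
  CAT0_space d -> mlocally_compact d ->
  group_action mul one act ->
  isometric_action d act -> proper_action d act ->
  cocompact_action d act -> smooth_action act ->
  (forall A, Acal A -> mclosed d A /\ convex d A) ->
  (forall A A', Acal A -> Acal A' ->
     exists g, act g @` A = A' /\ (forall x, A x -> A' x -> act g x = x)) ->
  (forall A, Acal A -> Gamma_discrete mul act A) ->
  (forall x y, exists A, Acal A /\ A x /\ A y) ->
  forall A, Acal A -> G_FS d act A = FS d setT.
Proof.
move=> [[gl [mul_cont _]] _] [d_metric _] _ act_law act_iso act_proper _ smooth
  Acal_convex Acal_trans _ Acal_cover A AA.
have [act1 actM] := act_law.
have actK g x : act (inv g) (act g x) = x by rewrite -actM (gmulV gl) act1.
have actKV g x : act g (act (inv g) x) = x.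
  by rewrite -actM (group_law_mulgV gl) act1.
apply/seteqP; split=> [_ [g [c [[c_geod _] ->]]] | c [c_geod _]].
  by split=> //; exact: gen_geod_comp_isometry.
have [A0 [AA0 [A0c0 _]]] := Acal_cover (c 0) (c 0).
have piece_into_A0 n : exists k, act k (c 0) = c 0 /\
    forall t, `|t| <= n%:R -> A0 (act k (c t)).
  have [x [y [s [seg piece]]]] := gen_geod_segment d_metric c_geod (ler0n _ n).
  have [B [AB [Bx By]]] := Acal_cover x y.
  have Bc t : `|t| <= n%:R -> B (c t).
    move=> /piece[r r_in ->].
    exact: (proj2 (Acal_convex B AB)) x y s Bx By seg r r_in.
  have [k [kB kfix]] := Acal_trans B A0 AB AA0.
  exists k; split; first by apply: kfix => //; apply: Bc; rewrite normr0.
  by move=> t /Bc Bct; rewrite -kB; exists (c t).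
have [k k_spec] := choice piece_into_A0.
have [g gc_A0] : exists g, forall t, A0 (act g (c t)).
  apply: (smooth_action_cluster gl mul_cont act_law smooth
    (proper_action_compact_stabilizer (x := c 0) act_proper)) => [n | t].
    exact: (k_spec n).1.
  by apply: filterS (nbhs_infty_ger `|t|) => n /(k_spec n).2.
have [h [hA _]] := Acal_trans A A0 AA AA0.
exists (mul (inv g) h), (fun t => act (mul (inv h) g) (c t)); split.
  split=> [|t]; first exact: gen_geod_comp_isometry.
  by have := gc_A0 t; rewrite -hA => -[x Ax hx]; rewrite actM -hx actK.
by apply: funext => t; rewrite !actM actKV actK.
Qed.
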